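(* Let $(X,d_X)$ and $(Y,d_Y)$ be compact metric spaces and equip $X\times Y$ with the metric $d((x,y),(x',y'))=d_X(x,x')+d_Y(y,y')$. Let $T:X\times Y\to X\times Y$ be an isometry (onto) such that $\alpha_T(C(X)\otimes1_Y)\subseteq C(X)\otimes1_Y$, where $\alpha_T:C(X\times Y)\to C(X\times Y)$, $\alpha_T(F)=F\circ T$. Then $T$ is a product isometry: there are isometries $h$ of $X$ and $k$ of $Y$ with $T(x,y)=(h(x),k(y))$ for all $(x,y)$. In particular the group of such isometries equals $\mathrm{ISO}(X)\times\mathrm{ISO}(Y)$. *)

From Stdlib Require Import Reals.
Open Scope R_scope.

Definition is_metric {X : Type} (d : X -> X -> R) : Prop :=
  (forall x y, 0 <= d x y) /\
  (forall x y, d x y = 0 <-> x = y) /\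
  (forall x y, d x y = d y x) /\
  (forall x y z, d x z <= d x y + d y z).

Definition seq_converges {X : Type} (d : X -> X -> R) (u : nat -> X) (l : X) : Prop :=
  forall eps, 0 < eps -> exists N, forall n, (n >= N)%nat -> d (u n) l < eps.

(* Compactness of a metric space (sequential compactness, equivalent for
   metric spaces): every sequence has a convergent subsequence. *)
Definition compact_metric {X : Type} (d : X -> X -> R) : Prop :=
  forall u : nat -> X, exists (phi : nat -> nat) (l : X),
    (forall n m, (n < m)%nat -> (phi n < phi m)%nat) /\
    seq_converges d (fun n => u (phi n)) l.

Definition continuous_on_metric {X : Type} (d : X -> X -> R) (f : X -> R) : Prop :=
  forall x eps, 0 < eps -> exists delta, 0 < delta /\
    forall x', d x x' < delta -> Rabs (f x' - f x) < eps.

Definition onto_isometry {X : Type} (d : X -> X -> R) (h : X -> X) : Prop :=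
  (forall x x', d (h x) (h x') = d x x') /\ (forall z, exists x, h x = z).

Definition sum_metric {X Y : Type} (dX : X -> X -> R) (dY : Y -> Y -> R)
  (p q : X * Y) : R := dX (fst p) (fst q) + dY (snd p) (snd q).

(* alpha_T (C(X) (x) 1_Y) is contained in C(X) (x) 1_Y: for every continuous
   f on X, F = f o pr_1 satisfies F o T = g o pr_1 for some continuous g on X. *)
Definition preserves_CX_tensor_1 {X Y : Type} (dX : X -> X -> R)
  (T : X * Y -> X * Y) : Prop :=
  forall f : X -> R, continuous_on_metric dX f ->
    exists g : X -> R, continuous_on_metric dX g /\
      forall x y, f (fst (T (x, y))) = g x.

From Stdlib Require Import Reals.
From Stdlib Require Import Lra Lia Classical ClassicalEpsilon.
Open Scope R_scope.

(* Proof strategy.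
   (<-) If T = h x k with h an onto isometry, then F o T for F = f o pr_1 is
   (f o h) o pr_1, and f o h is continuous because h is an isometry.
   (->) Assume alpha_T preserves C(X) (x) 1_Y.
   1. Applying the hypothesis to the continuous function a |-> dX a p shows that
      the first coordinate of T(x, y) does not depend on y.
   2. Hence, T being an isometry for the sum metric, y |-> snd (T (x, y)) is a
      distance-preserving self-map of Y; by compactness of Y it is onto (a
      general fact about compact metric spaces, proved first: the image of an
      isometric self-map is closed, and a point at positive distance from it
      would make the orbit of the point an e-separated sequence).
   3. Surjectivity of these fibre maps then forces the second coordinate of
      T(x, y) to be independent of x and x |-> fst (T (x, y)) to be an isometry.
   So T(x, y) = (h x, k y); h and k are onto because T is. *)

Section MetricFacts.

Context {Y : Type} (d : Y -> Y -> R).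
Hypothesis hm : is_metric d.

Lemma dist_nonneg a b : 0 <= d a b.
Proof. apply hm. Qed.

Lemma dist_self a : d a a = 0.
Proof. apply (proj1 (proj2 hm)); reflexivity. Qed.

Lemma dist_eq0 a b : d a b = 0 -> a = b.
Proof. apply (proj1 (proj2 hm)). Qed.

Lemma dist_sym a b : d a b = d b a.
Proof. apply hm. Qed.

Lemma dist_triangle a b c : d a c <= d a b + d b c.
Proof. apply hm. Qed.

Lemma dist_to_point_continuous p : continuous_on_metric d (fun a => d a p).
Proof.
  intros a eps Heps. exists eps. split; [exact Heps|]. intros a' Ha'.
  pose proof (dist_triangle a a' p). pose proof (dist_triangle a' a p).
  rewrite (dist_sym a' a) in *. apply Rabs_def1; lra.
Qed.

Lemma strict_mono_ge (phi : nat -> nat) :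
  (forall n m, (n < m)%nat -> (phi n < phi m)%nat) -> forall n, (n <= phi n)%nat.
Proof. intros Hphi n. induction n; [lia|]. specialize (Hphi n (S n)). lia. Qed.

Hypothesis hc : compact_metric d.

Lemma compact_no_separated_seq (u : nat -> Y) (e : R) : 0 < e ->
  (forall n m, (n < m)%nat -> e <= d (u n) (u m)) -> False.
Proof.
  intros He Hsep. destruct (hc u) as [phi [l [Hphi Hcv]]].
  destruct (Hcv (e / 2) ltac:(lra)) as [N HN].
  pose proof (HN N ltac:(lia)) as Hnear1. pose proof (HN (S N) ltac:(lia)) as Hnear2.
  cbn in Hnear1, Hnear2.
  pose proof (Hsep _ _ (Hphi N (S N) ltac:(lia))) as Hfar.
  pose proof (dist_triangle (u (phi N)) l (u (phi (S N)))).
  rewrite (dist_sym l) in *. lra.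
Qed.

Variable f : Y -> Y.
Hypothesis hf : forall a b, d (f a) (f b) = d a b.

Lemma iter_isometry n a b : d (Nat.iter n f a) (Nat.iter n f b) = d a b.
Proof. induction n; cbn; [reflexivity|]. rewrite hf; exact IHn. Qed.

Lemma isometry_image_closed z :
  (forall eps, 0 < eps -> exists y, d z (f y) < eps) -> exists y, f y = z.
Proof.
  intros Happrox.
  destruct (choice (fun (n : nat) y => d z (f y) < / INR (S n)))
    as [u Hu].
  { intro n. apply Happrox, Rinv_0_lt_compat, lt_0_INR. lia. }
  destruct (hc u) as [phi [l [Hphi Hcv]]].
  exists l. symmetry. apply dist_eq0.
  apply Rle_antisym; [|apply dist_nonneg].
  apply Rle_plus_epsilon. intros eps Heps. rewrite Rplus_0_l.
  destruct (archimed_cor1 (eps / 2) ltac:(lra)) as [M [HM HM0]].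
  destruct (Hcv (eps / 2) ltac:(lra)) as [N HN].
  set (n := (N + M)%nat).
  pose proof (HN n ltac:(unfold n; lia)) as Hconv. cbn in Hconv.
  assert (Hsmall : / INR (S (phi n)) <= / INR M).
  { apply Rinv_le_contravar; [apply lt_0_INR; lia|].
    apply le_INR. pose proof (strict_mono_ge phi Hphi n). unfold n in *; lia. }
  pose proof (Hu (phi n)) as Hclose.
  pose proof (dist_triangle z (f (u (phi n))) (f l)). rewrite hf in *. lra.
Qed.

Lemma isometry_onto z : exists y, f y = z.
Proof.
  apply NNPP. intro Hnot.
  destruct (classic (forall eps, 0 < eps -> exists y, d z (f y) < eps)) as [Happrox|Hgap].
  { exact (Hnot (isometry_image_closed z Happrox)). }
  apply not_all_ex_not in Hgap as [e He]. apply imply_to_and in He as [He Hfar].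
  apply (compact_no_separated_seq (fun n => Nat.iter n f z) e He).
  intros n m Hnm. cbn.
  replace m with (n + S (m - n - 1))%nat by lia.
  rewrite Nat.iter_add, iter_isometry. cbn.
  apply Rnot_lt_le. intro Hlt. apply Hfar. eexists. exact Hlt.
Qed.

End MetricFacts.

Section ProductIsometry.

Context {X Y : Type} (dX : X -> X -> R) (dY : Y -> Y -> R).
Hypotheses (hmX : is_metric dX) (hmY : is_metric dY).
Variable T : X * Y -> X * Y.
Hypothesis Tiso : forall p q, sum_metric dX dY (T p) (T q) = sum_metric dX dY p q.

Lemma fst_independent_of_y :
  preserves_CX_tensor_1 dX T -> forall x y y', fst (T (x, y)) = fst (T (x, y')).
Proof.
  intros HP x y y'.
  destruct (HP _ (dist_to_point_continuous dX hmX (fst (T (x, y'))))) as [g [_ Hg]].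
  apply (dist_eq0 dX hmX). rewrite (Hg x y), <- (Hg x y'). apply dist_self, hmX.
Qed.

Hypothesis Tfst : forall x y y', fst (T (x, y)) = fst (T (x, y')).

Lemma fibre_isometry x y y' : dY (snd (T (x, y))) (snd (T (x, y'))) = dY y y'.
Proof.
  pose proof (Tiso (x, y) (x, y')) as Hiso. unfold sum_metric in Hiso. cbn in Hiso.
  rewrite (Tfst x y y'), !(dist_self dX hmX) in Hiso. lra.
Qed.

Hypothesis hcY : compact_metric dY.

Lemma fibre_onto x z : exists y, snd (T (x, y)) = z.
Proof. apply (isometry_onto dY hmY hcY (fun y => snd (T (x, y)))), fibre_isometry. Qed.

(* Choosing y' with snd T(x', y') = snd T(x, y),
   comparing d(T(x,y), T(x',y')) with d(T(x,y), T(x',y)) forces y' = y. *)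
Lemma snd_independent_and_fst_isometry x x' y :
  snd (T (x, y)) = snd (T (x', y)) /\ dX (fst (T (x, y))) (fst (T (x', y))) = dX x x'.
Proof.
  destruct (fibre_onto x' (snd (T (x, y)))) as [y' Hy'].
  pose proof (Tiso (x, y) (x', y')) as Hiso'. pose proof (Tiso (x, y) (x', y)) as Hiso.
  unfold sum_metric in Hiso, Hiso'. cbn in Hiso, Hiso'.
  rewrite Hy', (Tfst x' y' y), (dist_self dY hmY) in Hiso'.
  rewrite (dist_self dY hmY) in Hiso.
  pose proof (dist_nonneg dY hmY (snd (T (x, y))) (snd (T (x', y)))).
  pose proof (dist_nonneg dY hmY y y').
  assert (Hyy : y = y') by (apply (dist_eq0 dY hmY); lra). subst y'.
  split; [congruence|lra].
Qed.

End ProductIsometry.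

Lemma product_preserves_CX_tensor_1 (X Y : Type) (dX : X -> X -> R)
  (T : X * Y -> X * Y) (h : X -> X) (k : Y -> Y) :
  (forall x x', dX (h x) (h x') = dX x x') -> (forall x y, T (x, y) = (h x, k y)) ->
  preserves_CX_tensor_1 dX T.
Proof.
  intros hiso HT f Hf. exists (fun x => f (h x)). split.
  - intros x eps He. destruct (Hf (h x) eps He) as [del [Hdel Hcont]].
    exists del. split; [exact Hdel|]. intros x' Hx'. apply Hcont. rewrite hiso. exact Hx'.
  - intros x y. rewrite HT. reflexivity.
Qed.

Theorem lemma3p3 (X Y : Type) (dX : X -> X -> R) (dY : Y -> Y -> R)
  (hmX : is_metric dX) (hmY : is_metric dY)
  (hcX : compact_metric dX) (hcY : compact_metric dY)
  (T : X * Y -> X * Y) (hT : onto_isometry (sum_metric dX dY) T) :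
  preserves_CX_tensor_1 dX T <->
  exists (h : X -> X) (k : Y -> Y),
    onto_isometry dX h /\ onto_isometry dY k /\
    forall x y, T (x, y) = (h x, k y).
Proof.
  destruct hT as [Tiso Tonto]. split.
  - intro HP. pose proof (fst_independent_of_y dX hmX T HP) as Tfst.
    pose proof (snd_independent_and_fst_isometry dX dY hmX hmY T Tiso Tfst hcY) as Tsnd.
    destruct (classic (inhabited X /\ inhabited Y)) as [[[x0] [y0]]|Hempty].
    + exists (fun x => fst (T (x, y0))), (fun y => snd (T (x0, y))).
      split; [split|split; [split|]].
      * intros x x'. apply Tsnd.
      * intro z. destruct (Tonto (z, y0)) as [[x y] Hxy]. exists x.
        rewrite (Tfst x y0 y), Hxy. reflexivity.
      * apply (fibre_isometry dX dY hmX T Tiso Tfst).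
      * apply (fibre_onto dX dY hmX hmY T Tiso Tfst hcY).
      * intros x y. rewrite (surjective_pairing (T (x, y))).
        f_equal; [apply Tfst | symmetry; apply Tsnd].
    + exists (fun x => x), (fun y => y).
      split; [split; [reflexivity | intro z; exists z; reflexivity]|].
      split; [split; [reflexivity | intro z; exists z; reflexivity]|].
      intros x y. exfalso. apply Hempty. split; constructor; assumption.
  - intros [h [k [[hiso _] [_ HT]]]].
    exact (product_preserves_CX_tensor_1 X Y dX T h k hiso HT).
Qed.
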